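(* For $n\ge1$ let $A_n$ be the set of $n\times 2$ arrays $(m_{i,j})$ with entries in $\{0,1,2\}$ such that: (i) every entry $1$ has a $0$ immediately to its left or immediately above it; (ii) no entry $0$ has a $0$ immediately to its left or immediately above it; (iii) every entry $2$ has, in the same column, a $1$ immediately above it and a $0$ immediately above that $1$ (i.e. $m_{i,j}=2$ implies $i\ge 2$, $m_{i-1,j}=1$ and $m_{i-2,j}=0$, with rows indexed from the top). Let $d_n=|A_n|$. Then $d_n=d_{n-1}+2d_{n-3}$ for $n\ge4$, with $d_1=1$, $d_2=1$, $d_3=2$.
   Context: For example $A_1=\{(0\ 1)\}$ and $A_2=\left\{\begin{pmatrix}0&1\\1&0\end{pmatrix}\right\}$. *)

From mathcomp Require Import all_boot all_algebra.
Set Implicit Arguments. Unset Strict Implicit. Unset Printing Implicit Defensive.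

(* An n x 2 array with entries in {0,1,2}: a matrix over 'I_3.
   Rows are indexed 0..n-1 from the top, columns 0,1 from the left. *)

Definition ent (n : nat) (M : 'M['I_3]_(n, 2)) (r c : nat) : option nat :=
  match (insub r : option 'I_n), (insub c : option 'I_2) with
  | Some i, Some j => Some (nat_of_ord (M i j))
  | _, _ => None
  end.

Definition zero_left n (M : 'M['I_3]_(n, 2)) (i j : nat) : bool :=
  (0 < j) && (ent M i j.-1 == Some 0).

Definition zero_above n (M : 'M['I_3]_(n, 2)) (i j : nat) : bool :=
  (0 < i) && (ent M i.-1 j == Some 0).

Definition validA n (M : 'M['I_3]_(n, 2)) : bool :=
  [forall i : 'I_n, forall j : 'I_2,
    [&& ((nat_of_ord (M i j) == 1) ==> (zero_left M i j || zero_above M i j)),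
        ((nat_of_ord (M i j) == 0) ==> ~~ (zero_left M i j || zero_above M i j)) &
        ((nat_of_ord (M i j) == 2) ==>
           [&& 2 <= i, ent M i.-1 j == Some 1 & ent M (i - 2) j == Some 0])]].

Definition A_set n : {set 'M['I_3]_(n, 2)} := [set M | validA M].

Definition d n : nat := #|A_set n|.

(* Validity of an array is local: each row is constrained only by the two rows
   above it.  So the number of valid continuations of length n below a window of
   two rows satisfies a transfer recursion that is linear in the counts at the
   successor windows.  A computation shows e(6) = e(5) + 2 e(3) for every one of
   the 100 windows, reachable or not; by linearity e(n+3) = e(n+2) + 2 e(n) then
   holds for all n >= 3, and d_n is the count below the empty window. *)

From mathcomp Require Import all_boot all_algebra.
Set Implicit Arguments. Unset Strict Implicit. Unset Printing Implicit Defensive.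

Lemma big_tuple_cons (R : Type) (idx : R) (op : Monoid.com_law idx)
    (T : finType) n (F : n.+1.-tuple T -> R) :
  \big[op/idx]_(t : n.+1.-tuple T) F t =
  \big[op/idx]_(x : T) \big[op/idx]_(t : n.-tuple T) F [tuple of x :: t].
Proof.
rewrite pair_big (reindex (fun p : T * n.-tuple T => [tuple of p.1 :: p.2])) //.
exists (fun t => (thead t, [tuple of behead t])) => [[x t] _|t _] /=.
  by congr pair; apply: val_inj.
by rewrite [RHS]tuple_eta.
Qed.

Lemma big_full_seq (R : Type) (idx : R) (op : Monoid.com_law idx)
    (T : finType) (s : seq T) (P : pred T) (F : T -> R) :
  uniq s -> (forall x, x \in s) ->
  \big[op/idx]_(x <- s | P x) F x = \big[op/idx]_(x | P x) F x.
Proof.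
move=> s_uniq s_full; apply: perm_big; apply: uniq_perm => // [|x].
  exact: index_enum_uniq.
by rewrite s_full mem_index_enum.
Qed.

Lemma onth_lt (T : Type) (x0 : T) (s : seq T) i : i < size s -> onth s i = Some (nth x0 s i).
Proof. by move=> lt_i; rewrite onthE (nth_map x0). Qed.

Lemma forall_ord_iota n (P : pred nat) : [forall i : 'I_n, P i] = all P (iota 0 n).
Proof.
rewrite -val_enum_ord all_map.
by apply/forallP/allP => [all_i i _|all_i i]; [apply: all_i | apply: all_i; rewrite mem_enum].
Qed.

Notation row := ('I_3 * 'I_3)%type.
Notation window := (option row * option row)%type.

Definition entry (r : row) (j : nat) : 'I_3 := if j == 0 then r.1 else r.2.

Definition column (j : nat) (o : option row) : option nat :=
  omap (fun r => val (entry r j)) o.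

Definition cell_ok (x : nat) (left above above2 : option nat) : bool :=
  let zero_near := (left == Some 0) || (above == Some 0) in
  [&& (x == 1) ==> zero_near, (x == 0) ==> ~~ zero_near &
      (x == 2) ==> (above == Some 1) && (above2 == Some 0)].

Definition cell_ok_at (e : nat -> nat -> option nat) (i j x : nat) : bool :=
  cell_ok x (if j is j'.+1 then e i j' else None)
            (if i is i'.+1 then e i' j else None)
            (if i is i'.+2 then e i' j else None).

Lemma eq_cell_ok_at e e' : e =2 e' -> forall i j x, cell_ok_at e i j x = cell_ok_at e' i j x.
Proof. by move=> ee' [|[|i]] [|j] x; rewrite /cell_ok_at ?ee'. Qed.

Lemma validAE n (M : 'M['I_3]_(n, 2)) :
  validA M = [forall i : 'I_n, forall j : 'I_2, cell_ok_at (ent M) i j (M i j)].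
Proof.
apply: eq_forallb => i; apply: eq_forallb => j.
have noneN (k : nat) : (None == Some k) = false by [].
rewrite /cell_ok_at /cell_ok /zero_left /zero_above.
by case: i => [[|[|i]] ?]; case: j => [[|j] ?]; rewrite /= ?noneN ?orbF ?andbF ?subSS ?subn0.
Qed.

Definition row_ok (w : window) (r : row) : bool :=
  all (fun j => cell_ok (entry r j)
         (if j is j'.+1 then column j' (Some r) else None) (column j w.1) (column j w.2))
      (iota 0 2).

Definition start : window := (None, None).
Definition shift (w : window) (r : row) : window := (Some r, w.1).

Fixpoint valid_from (w : window) (s : seq row) : bool :=
  if s is r :: s' then row_ok w r && valid_from (shift w r) s' else true.

Definition window_at (s : seq row) (i : nat) : window :=
  (if i is i'.+1 then onth s i' else None, if i is i'.+2 then onth s i' else None).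

Definition seq_ent (s : seq row) (i j : nat) : option nat :=
  if j < 2 then column j (onth s i) else None.

Lemma row_ok_window_at (s : seq row) x0 i : i < size s ->
  row_ok (window_at s i) (nth x0 s i) =
  all (fun j => cell_ok_at (seq_ent s) i j (entry (nth x0 s i) j)) (iota 0 2).
Proof.
move=> lt_i; apply: eq_in_all => j; rewrite mem_iota => /andP[_ lt_j2].
rewrite /cell_ok_at /seq_ent /window_at lt_j2 (onth_lt x0 lt_i).
by case: j lt_j2 => [|[|//]] _ /=; case: i lt_i => [|[|i]].
Qed.

Lemma window_at_cat p s i : i <= size p -> window_at (p ++ s) i = window_at p i.
Proof.
move=> le_i; rewrite /window_at.
by case: i le_i => [|[|i]] le_i; rewrite ?onth_cat ?le_i ?(ltnW le_i) ?(ltn_trans _ le_i).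
Qed.

Lemma shift_window_at p r :
  shift (window_at p (size p)) r = window_at (rcons p r) (size (rcons p r)).
Proof.
rewrite /shift /window_at size_rcons -cats1 onth_cat ltnn subnn.
by case E: (size p) => [|k] //; rewrite onth_cat E ltnSn.
Qed.

Lemma valid_from_window_at p s x0 :
  valid_from (window_at p (size p)) s =
  all (fun i => row_ok (window_at (p ++ s) i) (nth x0 (p ++ s) i)) (iota (size p) (size s)).
Proof.
elim: s p => [|r s IHs] p /=; first by [].
rewrite window_at_cat // nth_cat ltnn subnn /=; congr andb.
by rewrite shift_window_at IHs size_rcons cat_rcons.
Qed.

Definition mx_of_rows n (t : n.-tuple row) : 'M['I_3]_(n, 2) :=
  \matrix_(i, j) entry (tnth t i) j.

Definition rows_of_mx n (M : 'M['I_3]_(n, 2)) : n.-tuple row :=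
  [tuple (M i ord0, M i ord_max) | i < n].

Lemma mx_of_rows_bij n : bijective (@mx_of_rows n).
Proof.
exists (@rows_of_mx n) => [t|M].
  by apply: eq_from_tnth => i; rewrite tnth_mktuple !mxE; case: (tnth t i).
apply/matrixP => i j; rewrite !mxE tnth_mktuple /entry.
by case: j => [[|[|//]] ?]; congr (M _ _); apply: val_inj.
Qed.

Lemma ent_mx_of_rows n (t : n.-tuple row) r c : ent (mx_of_rows t) r c = seq_ent t r c.
Proof.
rewrite /ent /seq_ent; case: insubP => [i _ <-|]; last first.
  by rewrite -leqNgt => le_n; rewrite onth_default ?size_tuple //; case: ifP.
case: insubP => [j -> <-|/negbTE -> //].
by rewrite mxE (tnth_nth (ord0, ord0)) (onth_lt (ord0, ord0)) // size_tuple ltn_ord.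
Qed.

Lemma validA_mx_of_rows n (t : n.-tuple row) : validA (mx_of_rows t) = valid_from start t.
Proof.
pose x0 : row := (ord0, ord0).
rewrite validAE (valid_from_window_at [::] t x0) size_tuple -forall_ord_iota.
apply: eq_forallb => i; rewrite row_ok_window_at ?size_tuple // -forall_ord_iota.
by apply: eq_forallb => j; rewrite (eq_cell_ok_at (ent_mx_of_rows t)) mxE (tnth_nth x0).
Qed.

Lemma d_sum_valid n : d n = \sum_(t : n.-tuple row) valid_from start t.
Proof.
rewrite /d -sum1_card big_mkcond (reindex _ (onW_bij _ (mx_of_rows_bij n))) /=.
by apply: eq_bigr => t _; rewrite inE validA_mx_of_rows.
Qed.

(* Explicit enumerations: [enum] of a finite type does not reduce under [vm_compute]. *)
Definition ords3 : seq 'I_3 :=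
  [:: Ordinal (isT : 0 < 3); Ordinal (isT : 1 < 3); Ordinal (isT : 2 < 3)].

Definition all_rows : seq row := [seq (a, b) | a <- ords3, b <- ords3].

Definition all_windows : seq window :=
  let orows := None :: map Some all_rows in [seq (o, o') | o <- orows, o' <- orows].

Lemma mem_ords3 (a : 'I_3) : a \in ords3.
Proof. by rewrite -(mem_map val_inj) /=; case: a => [[|[|[|//]]] ?]. Qed.

Lemma mem_all_rows (r : row) : r \in all_rows.
Proof. by case: r => a b; apply/allpairsP; exists (a, b); rewrite !mem_ords3. Qed.

Lemma all_rows_uniq : uniq all_rows.
Proof. by apply: allpairs_uniq => // [[a b] [a' b']] _ _ /= ->. Qed.

Lemma mem_all_windows (w : window) : w \in all_windows.
Proof.
have mem_o (o : option row) : o \in None :: map Some all_rows.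
  by case: o => [r|]; rewrite ?mem_head // in_cons map_f ?mem_all_rows ?orbT.
by case: w => o o'; apply/allpairsP; exists (o, o'); rewrite !mem_o.
Qed.

Fixpoint extensions n (w : window) : nat :=
  if n is m.+1 then sumn [seq extensions m (shift w r) | r <- all_rows & row_ok w r] else 1.

Lemma extensionsS n w : extensions n.+1 w = \sum_(r | row_ok w r) extensions n (shift w r).
Proof.
have -> : extensions n.+1 w = sumn [seq extensions n (shift w r) | r <- all_rows & row_ok w r].
  by [].
by rewrite sumnE big_map big_filter (big_full_seq _ _ _ all_rows_uniq mem_all_rows).
Qed.

Lemma sum_valid_from n w : \sum_(t : n.-tuple row) valid_from w t = extensions n w.
Proof.
elim: n w => [|n IHn] w.
  by rewrite (big_pred1 [tuple]) // => t /=; apply/esym/eqP; exact: tuple0.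
rewrite big_tuple_cons extensionsS [RHS]big_mkcond; apply: eq_bigr => r _ /=.
by case: (row_ok w r); [exact: IHn | exact: big1].
Qed.

Lemma extensions_base w : extensions 6 w = extensions 5 w + 2 * extensions 3 w.
Proof. by apply/eqP; move: w (mem_all_windows w); apply/allP; vm_compute. Qed.

Lemma extensions_rec n w : 3 <= n ->
  extensions (n + 3) w = extensions (n + 2) w + 2 * extensions n w.
Proof.
elim: n w => [//|n IHn] w; rewrite leq_eqVlt => /predU1P[<-|lt_3n].
  exact: extensions_base.
rewrite !addSn !extensionsS big_distrr -big_split /=.
by apply: eq_bigr => r _; apply: IHn.
Qed.

Theorem theorem5 :
  [/\ d 1 = 1, d 2 = 1, d 3 = 2 &
      forall n : nat, 4 <= n -> d n = d n.-1 + 2 * d (n - 3)].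
Proof.
have d_ext n : d n = extensions n start by rewrite d_sum_valid sum_valid_from.
split; rewrite ?d_ext //.
case=> [|[|[|[|[|[|n]]]]]] // _; rewrite !d_ext //.
by have := extensions_rec start (isT : 3 <= n.+3); rewrite !addnS addn0.
Qed.
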